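(* Let $k\ge4$ be an integer and $\eta\in[\eta_{k+1},\eta_k)$. Then $\angle z_{k-1}z_kw_1,\ \angle z_kw_1w_2,\ \angle w_{k-1}w_kb_0,\ \angle w_kb_0z_0\in(0,\pi)$.
   Context: For $\eta\in(0,\pi/3)$ let $a=\frac{e^{-i\eta}}{2\cos\eta}$, $c=\frac{1}{1-|a|^4}$, and for integers $j\ge0$ put $z_j=ca^{j+1}$, $w_j=1-c|a|^2a^j$, $b_0=a+c|a|^4$. For $u,v,w\in\mathbb{C}$, $\angle uvw=\arg\frac{w-v}{u-v}$ with $\arg$ taking values in $[0,2\pi)$. For integers $k\ge1$ let $\Phi_k(\eta)=(1-|a|^4)\sin((k-1)\eta)-|a|^3\sin((k-2)\eta)+|a|^k\sin\eta$; for each $k\ge4$, $\Phi_k$ has a unique zero in $(\pi/k,\pi/(k-1))$, denoted $\eta_k$. *)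

From Stdlib Require Import Reals.
From Coquelicot Require Import Coquelicot.
Open Scope R_scope.

(* Principal argument with values in [0, 2*PI): for z <> 0 this is the unique
   theta in [0, 2 PI) with z = |z| (cos theta + i sin theta).
   (Value at 0 is irrelevant/unspecified; we set 0.) *)
Definition arg (z : C) : R :=
  if Ceq_dec z (RtoC 0) then 0
  else if Rle_dec 0 (Im z) then acos (Re z / Cmod z)
       else 2 * PI - acos (Re z / Cmod z).

Definition angle (u v w : C) : R := arg ((w - v) / (u - v))%C.

Definition a_ (eta : R) : C :=
  ((RtoC (cos eta) - Ci * RtoC (sin eta)) / RtoC (2 * cos eta))%C.

Definition c_ (eta : R) : R := 1 / (1 - (Cmod (a_ eta)) ^ 4).

Definition z_ (eta : R) (j : nat) : C := (RtoC (c_ eta) * Cpow (a_ eta) (j + 1))%C.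

Definition w_ (eta : R) (j : nat) : C :=
  (1 - RtoC (c_ eta * (Cmod (a_ eta)) ^ 2) * Cpow (a_ eta) j)%C.

Definition b0 (eta : R) : C := (a_ eta + RtoC (c_ eta * (Cmod (a_ eta)) ^ 4))%C.

Definition Phi (k : nat) (eta : R) : R :=
  let m := Cmod (a_ eta) in
  (1 - m ^ 4) * sin ((INR k - 1) * eta) - m ^ 3 * sin ((INR k - 2) * eta)
  + m ^ k * sin eta.

(* eta_k: the (unique, by the paper) zero of Phi_k in (PI/k, PI/(k-1)). *)
Definition is_eta_k (k : nat) (e : R) : Prop :=
  PI / INR k < e < PI / (INR k - 1) /\ Phi k e = 0.

From Stdlib Require Import Reals Lra Lia Psatz.
From Coquelicot Require Import Coquelicot.
Open Scope R_scope.

(* With rho = |a| = 1/(2 cos eta) we have conj a = 1 - a and a (1 - a) = rho^2, so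
   every cross product (w - v) * conj (u - v) of the four angles expands into a
   combination of a^2, (1 - a)^j and reals.  Its imaginary part is a positive
   multiple of Phi_k(eta) for the two angles at z_k and w_k, and of
   Psi_k(eta) = sin eta + rho^(k-2) sin ((k+1) eta) for the two angles at w_1 and
   b_0.  Psi_k > 0 for eta < pi/(k-1) by a direct estimate.  Phi_k > 0 on
   (0, eta_k): for k = 4 it factors explicitly; for k >= 5, Phi_k / rho has only
   nonnegative terms on (0, pi/k] and is decreasing on (pi/k, pi/(k-1)), where it
   vanishes at eta_k. *)

Definition rho (x : R) : R := / (2 * cos x).

Definition Psi (k : nat) (x : R) : R := sin x + rho x ^ (k - 2) * sin ((INR k + 1) * x).

Lemma pow_sq_comm (x : R) (n : nat) : (x ^ 2) ^ n = (x ^ n) ^ 2.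
Proof. rewrite <- !pow_mult, Nat.mul_comm. reflexivity. Qed.

Lemma pow_le_pow_of_le_1 (r : R) (m n : nat) : 0 <= r <= 1 -> (m <= n)%nat -> r ^ n <= r ^ m.
Proof.
  intros Hr Hmn. destruct (Nat.le_exists_sub m n Hmn) as [d [-> _]].
  rewrite pow_add. pose proof (pow_le r m (proj1 Hr)).
  pose proof (pow_incr r 1 d Hr) as Hd. rewrite pow1 in Hd. nra.
Qed.

Lemma div_lt_iff (a b t : R) : 0 < b -> a / b < t <-> a < b * t.
Proof.
  intros Hb. assert (E : a / b * b = a) by (field; lra).
  split; intros H; nra.
Qed.

Lemma lt_div_iff (a b t : R) : 0 < b -> t < a / b <-> b * t < a.
Proof.
  intros Hb. assert (E : a / b * b = a) by (field; lra).
  split; intros H; nra.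
Qed.

Lemma rho_pos (x : R) : 0 < cos x -> 0 < rho x.
Proof. intros Hc. apply Rinv_0_lt_compat. lra. Qed.

Lemma cos_gt_half (x : R) : 0 <= x -> 3 * x < PI -> 1 / 2 < cos x.
Proof.
  intros H0 H1. pose proof PI_RGT_0.
  rewrite <- cos_PI3. apply cos_decreasing_1; lra.
Qed.

Lemma rho_lt_1 (x : R) : 1 / 2 < cos x -> rho x < 1.
Proof. intros Hc. unfold rho. rewrite <- Rinv_1. apply Rinv_lt_contravar; lra. Qed.

Lemma rho_sq_le_half (x : R) : 0 <= x <= PI / 4 -> rho x ^ 2 <= 1 / 2.
Proof.
  intros Hx. pose proof PI_RGT_0.
  assert (Hc : 0 < cos x) by (apply cos_gt_0; lra).
  assert (H2 : 0 <= cos (2 * x)) by (apply cos_ge_0; lra).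
  rewrite cos_2a_cos in H2. unfold rho.
  rewrite pow_inv. apply Rmult_le_reg_r with ((2 * cos x) ^ 2); [nra|].
  rewrite Rinv_l by (apply pow_nonzero; lra). nra.
Qed.

Lemma arg_in_0_PI (z : C) : 0 < Im z -> 0 < arg z < PI.
Proof.
  intros Hz. unfold arg.
  destruct (Ceq_dec z (RtoC 0)) as [E|Hz0]; [subst z; simpl in Hz; lra|].
  destruct (Rle_dec 0 (Im z)) as [_|]; [|lra].
  assert (Hm : 0 < Cmod z) by (apply Cmod_gt_0; exact Hz0).
  assert (Hre : Re z ^ 2 < Cmod z ^ 2) by (rewrite Cmod2_alt; nra).
  apply acos_bound_lt; split.
  - apply Rmult_lt_reg_r with (Cmod z); [lra|]. field_simplify; nra.
  - apply Rmult_lt_reg_r with (Cmod z); [lra|]. field_simplify; nra.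
Qed.

Lemma angle_in_0_PI (u v w : C) :
  0 < Im ((w - v) * Cconj (u - v)) -> 0 < angle u v w < PI.
Proof.
  intros H. unfold angle. apply arg_in_0_PI.
  assert (Huv : (u - v)%C <> 0).
  { intros E. rewrite E in H. destruct (w - v)%C as [p q]. simpl in H. lra. }
  assert (Hconj : Cconj (u - v) <> 0).
  { intros E. apply Huv. rewrite <- (Cconj_conj (u - v)), E.
    apply injective_projections; simpl; ring. }
  replace ((w - v) / (u - v))%C
    with (RtoC (/ Cmod (u - v) ^ 2) * ((w - v) * Cconj (u - v)))%C.
  2: { rewrite RtoC_inv, Cmod2_conj; [field; auto|].
       apply pow_nonzero. intros E. apply Huv, Cmod_eq_0, E. }
  rewrite im_scal_l. apply Rmult_lt_0_compat; [|exact H].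
  apply Rinv_0_lt_compat, pow_lt, Cmod_gt_0, Huv.
Qed.

Lemma Cconj_RtoC (r : R) : Cconj (RtoC r) = RtoC r.
Proof. apply injective_projections; simpl; ring. Qed.

Section Vertices.

Variable eta : R.
Hypothesis cos_pos : 0 < cos eta.

Local Notation a := (a_ eta).
Local Notation r := (rho eta).
Local Notation c := (c_ eta).

Lemma a_polar : a = (r * cos eta, - (r * sin eta)).
Proof.
  unfold a_, rho, Cdiv, Cinv, Cmult, Cminus, Cplus, Copp, RtoC, Ci; simpl.
  apply injective_projections; simpl; field; lra.
Qed.

Lemma Cmod_a : Cmod a = r.
Proof.
  pose proof (rho_pos eta cos_pos) as Hr.
  rewrite a_polar. unfold Cmod; simpl.
  transitivity (sqrt (r * r)); [f_equal|apply sqrt_square; lra].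
  pose proof (sin2_cos2 eta) as H. unfold Rsqr in H.
  transitivity (r * r * (sin eta * sin eta + cos eta * cos eta)); [ring|].
  rewrite H. ring.
Qed.

Lemma Cconj_a : Cconj a = (1 - a)%C.
Proof.
  rewrite a_polar. unfold Cconj, Cminus, Cplus, Copp, RtoC, rho; simpl.
  apply injective_projections; simpl; field; lra.
Qed.

Lemma a_mul_1_sub_a : (a * (1 - a))%C = RtoC (r ^ 2).
Proof. rewrite <- Cconj_a, <- Cmod2_conj, Cmod_a. reflexivity. Qed.

Lemma Cpow_a (n : nat) :
  Cpow a n = (r ^ n * cos (INR n * eta), - (r ^ n * sin (INR n * eta))).
Proof.
  induction n as [|n IH].
  - rewrite Rmult_0_l, cos_0, sin_0. apply injective_projections; simpl; ring.
  - rewrite Cpow_S, IH, a_polar, S_INR, Rmult_plus_distr_r, Rmult_1_l,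
      cos_plus, sin_plus.
    apply injective_projections; simpl; ring.
Qed.

Lemma Im_Cpow_a (n : nat) : Im (Cpow a n) = - (r ^ n * sin (INR n * eta)).
Proof. rewrite Cpow_a. reflexivity. Qed.

Lemma Im_Cpow_1_sub_a (n : nat) : Im (Cpow (1 - a) n) = r ^ n * sin (INR n * eta).
Proof. rewrite <- Cconj_a, <- Cpow_conj, im_conj, Im_Cpow_a. ring. Qed.

Lemma Cconj_z (j : nat) : Cconj (z_ eta j) = (RtoC c * Cpow (1 - a) (j + 1))%C.
Proof. unfold z_. rewrite Cmult_conj, Cpow_conj, Cconj_RtoC, Cconj_a. reflexivity. Qed.

Lemma Cconj_w (j : nat) :
  Cconj (w_ eta j) = (1 - RtoC (c * r ^ 2) * Cpow (1 - a) j)%C.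
Proof.
  unfold w_. rewrite Cminus_conj, Cmult_conj, Cpow_conj, !Cconj_RtoC, Cconj_a.
  rewrite Cmod_a. reflexivity.
Qed.

Lemma Cconj_b0 : Cconj (b0 eta) = (1 - a + RtoC (c * (r ^ 2) ^ 2))%C.
Proof.
  unfold b0. rewrite Cplus_conj, Cconj_RtoC, Cconj_a, Cmod_a.
  replace (r ^ 4) with ((r ^ 2) ^ 2) by ring. reflexivity.
Qed.

Lemma sin_2_eta : sin (INR 2 * eta) = sin eta / r.
Proof.
  replace (INR 2 * eta) with (2 * eta) by (simpl; ring).
  rewrite sin_2a. unfold rho. field. lra.
Qed.

(* [ring] cannot use [|a|^2 = a (1 - a)], so every power of [|a|^2] is first
   rewritten as a power of [a (1 - a)]. *)
Local Ltac reduce_to_a :=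
  pose proof a_mul_1_sub_a as Hs; set (s := r ^ 2) in *;
  rewrite ?RtoC_mult, ?RtoC_pow, <- ?Hs, ?Cpow_mult_l, ?Cpow_add_r; ring.

Lemma Im_Psi_combination (j m : nat) :
  Im (RtoC (c ^ 2 * (r ^ 2) ^ j) * Cpow (1 - a) (m + 3)
      + RtoC (c ^ 2 * (r ^ 2) ^ (j + 1)) * Cpow (1 - a) 1 - RtoC (c * (r ^ 2) ^ j))
  = c ^ 2 * r ^ (j + j + 3) * Psi (m + 2) eta.
Proof.
  unfold Cminus, Psi. rewrite !im_plus, im_opp, !im_scal_l, im_RtoC, !Im_Cpow_1_sub_a.
  replace (m + 2 - 2)%nat with m by lia.
  replace (INR (m + 3)) with (INR (m + 2) + 1) by (rewrite !plus_INR; simpl; ring).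
  rewrite !pow_add, (pow_sq_comm r j), Rmult_1_l. ring.
Qed.

Lemma Im_cross_at_w1 (k : nat) : (2 <= k)%nat ->
  Im ((w_ eta 2 - w_ eta 1) * Cconj (z_ eta k - w_ eta 1)) = c ^ 2 * r ^ 7 * Psi k eta.
Proof.
  intros Hk. destruct (Nat.le_exists_sub 2 k Hk) as [m [-> _]].
  rewrite Cminus_conj, Cconj_z, Cconj_w.
  unfold w_. rewrite Cmod_a.
  replace ((1 - RtoC (c * r ^ 2) * Cpow a 2 - (1 - RtoC (c * r ^ 2) * Cpow a 1)) *
     (RtoC c * Cpow (1 - a) (m + 2 + 1) - (1 - RtoC (c * r ^ 2) * Cpow (1 - a) 1)))%C
    with (RtoC (c ^ 2 * (r ^ 2) ^ 2) * Cpow (1 - a) (m + 3)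
          + RtoC (c ^ 2 * (r ^ 2) ^ (2 + 1)) * Cpow (1 - a) 1 - RtoC (c * (r ^ 2) ^ 2))%C
    by reduce_to_a.
  apply Im_Psi_combination.
Qed.

Lemma c_eq : c = 1 / (1 - r ^ 4).
Proof. unfold c_. rewrite Cmod_a. reflexivity. Qed.

Lemma c_pos : r < 1 -> 0 < c.
Proof.
  intros Hr1. pose proof (rho_pos eta cos_pos). rewrite c_eq.
  apply Rdiv_lt_0_compat; [lra|].
  assert (r ^ 2 < 1) by nra. replace (r ^ 4) with ((r ^ 2) ^ 2) by ring. nra.
Qed.

Hypothesis rho_ne_1 : r <> 1.

Lemma one_sub_rho4_neq_0 : 1 - r ^ 4 <> 0.
Proof.
  pose proof (rho_pos eta cos_pos). intros E. apply rho_ne_1.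
  assert (F : (1 - r) * ((1 + r) * (1 + r ^ 2)) = 0) by (rewrite <- E; ring).
  apply Rmult_integral in F as [F|F]; [lra|nra].
Qed.

Lemma Im_Phi_combination (j m : nat) :
  Im (RtoC (c * (r ^ 2) ^ j) * Cpow (1 - a) (m + 1)
      - RtoC (c ^ 2 * (r ^ 2) ^ (j + 2)) * Cpow (1 - a) m
      - RtoC (c ^ 2 * (r ^ 2) ^ (m + j + 1)) * Cpow a 2)
  = c ^ 2 * r ^ (m + j + j + 1) * Phi (m + 2) eta.
Proof.
  unfold Cminus. rewrite !im_plus, !im_opp, !im_scal_l, !Im_Cpow_1_sub_a, Im_Cpow_a, sin_2_eta.
  unfold Phi. rewrite Cmod_a.
  replace ((INR (m + 2) - 1) * eta) with (INR (m + 1) * eta) by (rewrite !plus_INR; simpl; ring).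
  replace ((INR (m + 2) - 2) * eta) with (INR m * eta) by (rewrite !plus_INR; simpl; ring).
  rewrite c_eq, !pow_add, (pow_sq_comm r j), (pow_sq_comm r m).
  pose proof (rho_pos eta cos_pos). pose proof one_sub_rho4_neq_0. field. lra.
Qed.

Lemma Im_cross_at_z (k : nat) : (2 <= k)%nat ->
  Im ((w_ eta 1 - z_ eta k) * Cconj (z_ eta (k - 1) - z_ eta k))
  = c ^ 2 * r ^ (k + 1) * Phi k eta.
Proof.
  intros Hk. destruct (Nat.le_exists_sub 2 k Hk) as [m [-> _]].
  replace (m + 2 - 1)%nat with (m + 1)%nat by lia.
  rewrite Cminus_conj, !Cconj_z.
  unfold w_, z_. rewrite Cmod_a.
  replace ((1 - RtoC (c * r ^ 2) * Cpow a 1 - RtoC c * Cpow a (m + 2 + 1)) *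
     (RtoC c * Cpow (1 - a) (m + 1 + 1) - RtoC c * Cpow (1 - a) (m + 2 + 1)))%C
    with (RtoC (c * (r ^ 2) ^ 1) * Cpow (1 - a) (m + 1)
          - RtoC (c ^ 2 * (r ^ 2) ^ (1 + 2)) * Cpow (1 - a) m
          - RtoC (c ^ 2 * (r ^ 2) ^ (m + 1 + 1)) * Cpow a 2)%C by reduce_to_a.
  rewrite Im_Phi_combination. do 3 f_equal. lia.
Qed.

Lemma Im_cross_at_w (k : nat) : (2 <= k)%nat ->
  Im ((b0 eta - w_ eta k) * Cconj (w_ eta (k - 1) - w_ eta k))
  = c ^ 2 * r ^ (k + 3) * Phi k eta.
Proof.
  intros Hk. destruct (Nat.le_exists_sub 2 k Hk) as [m [-> _]].
  replace (m + 2 - 1)%nat with (m + 1)%nat by lia.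
  rewrite Cminus_conj, !Cconj_w.
  unfold w_, b0. rewrite Cmod_a.
  replace (r ^ 4) with ((r ^ 2) ^ 2) by ring.
  replace ((a + RtoC (c * (r ^ 2) ^ 2) - (1 - RtoC (c * r ^ 2) * Cpow a (m + 2))) *
     (1 - RtoC (c * r ^ 2) * Cpow (1 - a) (m + 1)
      - (1 - RtoC (c * r ^ 2) * Cpow (1 - a) (m + 2))))%C
    with (RtoC (c * (r ^ 2) ^ 2) * Cpow (1 - a) (m + 1)
          - RtoC (c ^ 2 * (r ^ 2) ^ (2 + 2)) * Cpow (1 - a) m
          - RtoC (c ^ 2 * (r ^ 2) ^ (m + 2 + 1)) * Cpow a 2)%C by reduce_to_a.
  rewrite Im_Phi_combination. do 3 f_equal. lia.
Qed.

Lemma z0_sub_b0 : (z_ eta 0 - b0 eta)%C = (- RtoC (c * (r ^ 2) ^ 2) * (1 - a))%C.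
Proof.
  unfold z_, b0. rewrite Cmod_a, Cpow_1_r.
  replace (RtoC c) with (RtoC (c * (r ^ 2) ^ 2) + 1)%C.
  - replace (r ^ 4) with ((r ^ 2) ^ 2) by ring. ring.
  - rewrite <- RtoC_plus. f_equal. rewrite c_eq.
    pose proof one_sub_rho4_neq_0. field. auto.
Qed.

Lemma Im_cross_at_b0 (k : nat) : (2 <= k)%nat ->
  Im ((z_ eta 0 - b0 eta) * Cconj (w_ eta k - b0 eta)) = c ^ 2 * r ^ 9 * Psi k eta.
Proof.
  intros Hk. destruct (Nat.le_exists_sub 2 k Hk) as [m [-> _]].
  rewrite z0_sub_b0, Cminus_conj, Cconj_w, Cconj_b0.
  replace ((- RtoC (c * (r ^ 2) ^ 2) * (1 - a)) *
     (1 - RtoC (c * r ^ 2) * Cpow (1 - a) (m + 2) - (1 - a + RtoC (c * (r ^ 2) ^ 2))))%C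
    with (RtoC (c ^ 2 * (r ^ 2) ^ 3) * Cpow (1 - a) (m + 3)
          + RtoC (c ^ 2 * (r ^ 2) ^ (3 + 1)) * Cpow (1 - a) 1 - RtoC (c * (r ^ 2) ^ 3))%C
    by reduce_to_a.
  apply Im_Psi_combination.
Qed.

End Vertices.

Lemma Psi_4_eq (x : R) : 0 < cos x -> Psi 4 x = sin x * (1 - rho x ^ 2) ^ 2 / rho x ^ 2.
Proof.
  intros Hc. unfold Psi. simpl (4 - 2)%nat.
  replace ((INR 4 + 1) * x) with (2 * (2 * x) + x) by (simpl; ring).
  rewrite sin_plus, !sin_2a, !cos_2a_cos. unfold rho. field. lra.
Qed.

Lemma Psi_pos (k : nat) (x : R) : (4 <= k)%nat -> 0 < x -> (INR k - 1) * x < PI ->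
  0 < Psi k x.
Proof.
  intros Hk Hx H1. pose proof PI_RGT_0.
  assert (HK : 4 <= INR k) by (apply le_INR in Hk; simpl in Hk; lra).
  assert (Hs : 0 < sin x) by (apply sin_gt_0; nra).
  destruct (Nat.eq_dec k 4) as [->|Hk4].
  { replace (INR 4) with 4 in * by (simpl; ring).
    assert (Hc : 1 / 2 < cos x) by (apply cos_gt_half; lra).
    pose proof (rho_pos x ltac:(lra)). pose proof (rho_lt_1 x Hc).
    rewrite Psi_4_eq by lra.
    apply Rdiv_lt_0_compat; [apply Rmult_lt_0_compat; [lra|]|]; apply pow_lt; nra. }
  assert (Hk5 : (5 <= k)%nat) by lia.
  assert (HK5 : 5 <= INR k) by (apply le_INR in Hk5; simpl in Hk5; lra).
  assert (Hx4 : x < PI / 4) by nra.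
  assert (Hc : 0 < cos x) by (apply cos_gt_0; lra).
  assert (Hr2 : rho x ^ 2 <= 1 / 2) by (apply rho_sq_le_half; lra).
  assert (Hr : 0 < rho x) by (apply rho_pos; lra).
  unfold Psi.
  destruct (Rle_or_lt ((INR k + 1) * x) PI) as [Hsmall|Hlarge].
  { assert (0 <= sin ((INR k + 1) * x)) by (apply sin_ge_0; nra).
    assert (0 < rho x ^ (k - 2)) by (apply pow_lt; lra). nra. }
  (* Here [sin ((k+1) x) = - sin u] with [0 < u < 2 x < PI / 2], and
     [rho x * sin (2 x) = sin x]. *)
  set (u := (INR k + 1) * x - PI).
  assert (Hu : 0 < u < 2 * x) by (unfold u; nra).
  replace ((INR k + 1) * x) with (u + PI) by (unfold u; ring). rewrite neg_sin.
  assert (Hsu : sin u < sin (2 * x)) by (apply sin_increasing_1; lra).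
  rewrite sin_2a in Hsu.
  replace (k - 2)%nat with (S (k - 3)) by lia. simpl pow.
  assert (Hrk : rho x ^ (k - 3) <= rho x ^ 2) by (apply pow_le_pow_of_le_1; nra || lia).
  assert (Hpow : 0 < rho x ^ (k - 3)) by (apply pow_lt; lra).
  assert (Hrc : rho x * (2 * sin x * cos x) = sin x) by (unfold rho; field; lra).
  assert (Hrsu : rho x * sin u < sin x) by nra.
  assert (rho x ^ (k - 3) * (rho x * sin u) < rho x ^ (k - 3) * sin x) by nra.
  nra.
Qed.

Lemma Phi_4_eq (x : R) : 0 < cos x ->
  Phi 4 x = sin x * (1 - rho x ^ 2) * (1 - 2 * rho x ^ 4) / rho x ^ 2.
Proof.
  intros Hc. unfold Phi. cbv zeta. rewrite Cmod_a by exact Hc.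
  replace ((INR 4 - 1) * x) with (2 * x + x) by (simpl; ring).
  replace ((INR 4 - 2) * x) with (2 * x) by (simpl; ring).
  rewrite sin_plus, sin_2a, cos_2a_cos. unfold rho. field. lra.
Qed.

Lemma Phi_4_pos (e x : R) : PI < 4 * e -> 3 * e < PI -> Phi 4 e = 0 -> 0 < x < e ->
  0 < Phi 4 x.
Proof.
  intros He1 He2 He0 Hx. pose proof PI_RGT_0.
  assert (Hce : 1 / 2 < cos e) by (apply cos_gt_half; lra).
  assert (Hcx : cos e < cos x) by (apply cos_decreasing_1; lra).
  assert (Hse : 0 < sin e) by (apply sin_gt_0; lra).
  assert (Hsx : 0 < sin x) by (apply sin_gt_0; lra).
  rewrite Phi_4_eq in He0 |- * by lra.
  pose proof (rho_pos e ltac:(lra)). pose proof (rho_lt_1 e Hce).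
  assert (Hrx : 0 < rho x < rho e).
  { split; [apply rho_pos; lra|]. apply Rinv_lt_contravar; nra. }
  assert (He4 : 1 - 2 * rho e ^ 4 = 0).
  { assert (0 < rho e ^ 2) by (apply pow_lt; lra).
    assert (0 < 1 - rho e ^ 2) by nra.
    apply (Rmult_eq_reg_l (sin e * (1 - rho e ^ 2) / rho e ^ 2)).
    - rewrite Rmult_0_r, <- He0. field. lra.
    - apply Rgt_not_eq, Rdiv_lt_0_compat; nra. }
  assert (0 < rho x ^ 2) by (apply pow_lt; lra).
  assert (rho x ^ 2 < rho e ^ 2) by nra.
  assert (rho x ^ 4 < rho e ^ 4)
    by (replace (rho x ^ 4) with ((rho x ^ 2) ^ 2) by ring;
        replace (rho e ^ 4) with ((rho e ^ 2) ^ 2) by ring; nra).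
  assert (0 < 1 - rho x ^ 2) by nra.
  apply Rdiv_lt_0_compat; [|lra].
  apply Rmult_lt_0_compat; [apply Rmult_lt_0_compat|]; lra.
Qed.

Definition Phi_over_rho (k : nat) (x : R) : R :=
  (1 - rho x ^ 4) * sin (INR k * x) + (1 - rho x ^ 2 - rho x ^ 4) * sin ((INR k - 2) * x)
  + rho x ^ (k - 1) * sin x.

(* The derivative of [Phi_over_rho k], using [rho' = 2 rho^2 sin]. *)
Definition dPhi_over_rho (k : nat) (x : R) : R :=
  - 8 * rho x ^ 5 * sin x * sin (INR k * x) + (1 - rho x ^ 4) * INR k * cos (INR k * x)
  - (4 * rho x ^ 3 + 8 * rho x ^ 5) * sin x * sin ((INR k - 2) * x)
  + (1 - rho x ^ 2 - rho x ^ 4) * (INR k - 2) * cos ((INR k - 2) * x)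
  + 2 * (INR k - 1) * rho x ^ k * sin x ^ 2 + rho x ^ (k - 1) * cos x.

Lemma Phi_over_rho_derive (k : nat) (x : R) : (2 <= k)%nat -> 0 < cos x ->
  is_derive (Phi_over_rho k) x (dPhi_over_rho k x).
Proof.
  intros Hk Hc. destruct (Nat.le_exists_sub 2 k Hk) as [m [-> _]].
  unfold Phi_over_rho, dPhi_over_rho, rho. auto_derive; [repeat split; lra|].
  replace (m + 2 - 1)%nat with (S m) by lia.
  rewrite plus_INR, (S_INR m), pow_add. simpl Init.Nat.pred. simpl (INR 2).
  change ((/ (2 * cos x)) ^ S m) with (/ (2 * cos x) * (/ (2 * cos x)) ^ m).
  field. lra.
Qed.

Lemma Phi_eq_rho_mul (k : nat) (x : R) : (1 <= k)%nat -> 0 < cos x ->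
  Phi k x = rho x * Phi_over_rho k x.
Proof.
  intros Hk Hc. destruct k as [|j]; [lia|].
  unfold Phi, Phi_over_rho. cbv zeta. rewrite Cmod_a by exact Hc.
  replace (S j - 1)%nat with j by lia.
  (* [sin (A + x) + sin (A - x) = 2 cos x sin A = sin A / rho x] *)
  set (A := (INR (S j) - 1) * x).
  replace (INR (S j) * x) with (A + x) by (unfold A; ring).
  replace ((INR (S j) - 2) * x) with (A - x) by (unfold A; ring).
  rewrite sin_plus, sin_minus. simpl pow. unfold rho. field. lra.
Qed.

Lemma Phi_over_rho_pos (k : nat) (x : R) : (4 <= k)%nat ->
  0 < x -> INR k * x <= PI -> 0 < Phi_over_rho k x.
Proof.
  intros Hk Hx H1. pose proof PI_RGT_0.
  assert (HK : 4 <= INR k) by (apply le_INR in Hk; simpl in Hk; lra).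
  assert (Hx4 : x <= PI / 4) by nra.
  assert (Hr2 : rho x ^ 2 <= 1 / 2) by (apply rho_sq_le_half; lra).
  assert (Hr : 0 < rho x) by (apply rho_pos, cos_gt_0; lra).
  assert (0 <= sin (INR k * x)) by (apply sin_ge_0; nra).
  assert (0 <= sin ((INR k - 2) * x)) by (apply sin_ge_0; nra).
  assert (0 < sin x) by (apply sin_gt_0; lra).
  unfold Phi_over_rho. set (r := rho x) in *.
  assert (0 < r ^ (k - 1)) by (apply pow_lt; lra).
  assert (0 <= 1 - r ^ 2 - r ^ 4) by (replace (r ^ 4) with ((r ^ 2) ^ 2) by ring; nra).
  assert (0 <= (1 - r ^ 4) * sin (INR k * x))
    by (pose proof (pow2_ge_0 r); apply Rmult_le_pos; lra).
  assert (0 <= (1 - r ^ 2 - r ^ 4) * sin ((INR k - 2) * x)) by (apply Rmult_le_pos; lra).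
  assert (0 < r ^ (k - 1) * sin x) by (apply Rmult_lt_0_compat; lra).
  lra.
Qed.

Lemma trig_signs_past_PI_over_k (k : nat) (x : R) : (5 <= k)%nat ->
  PI < INR k * x -> (INR k - 1) * x < PI ->
  (0 < x < PI / 4 /\ - sin x < sin (INR k * x) < 0 /\ cos (INR k * x) < - cos x) /\
  (0 <= sin ((INR k - 2) * x) /\ cos ((INR k - 2) * x) <= 0).
Proof.
  intros Hk H1 H2. pose proof PI_RGT_0.
  assert (HK : 5 <= INR k) by (apply le_INR in Hk; simpl in Hk; lra).
  assert (Hx : 0 < x < PI / 4) by nra.
  set (u := INR k * x - PI).
  assert (Hu : 0 < u < x) by (unfold u; nra).
  replace (INR k * x) with (u + PI) by (unfold u; ring).
  rewrite neg_sin, neg_cos.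
  assert (sin u < sin x) by (apply sin_increasing_1; lra).
  assert (0 < sin u) by (apply sin_gt_0; lra).
  assert (cos x < cos u) by (apply cos_decreasing_1; lra).
  repeat split; try lra.
  - apply sin_ge_0; nra.
  - apply cos_le_0; nra.
Qed.

Lemma dPhi_over_rho_neg (k : nat) (x : R) : (5 <= k)%nat ->
  PI < INR k * x -> (INR k - 1) * x < PI -> dPhi_over_rho k x < 0.
Proof.
  intros Hk H1 H2. pose proof PI_RGT_0. pose proof PI_4.
  destruct (trig_signs_past_PI_over_k k x Hk H1 H2)
    as [[Hx [Hsk Hck]] [Hs2 Hc2]].
  assert (HK : 5 <= INR k) by (apply le_INR in Hk; simpl in Hk; lra).
  assert (Hc : 0 < cos x) by (apply cos_gt_0; lra).
  assert (Hs : 0 < sin x) by (apply sin_gt_0; lra).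
  assert (Hr2 : rho x ^ 2 <= 1 / 2) by (apply rho_sq_le_half; lra).
  assert (Hrc : rho x * cos x = 1 / 2) by (unfold rho; field; lra).
  unfold dPhi_over_rho. set (r := rho x) in *.
  assert (Hr : 0 < r) by (apply rho_pos; lra).
  assert (Hr1 : r <= 1) by nra.
  assert (Hsin2 : sin x ^ 2 <= 1 / 2).
  { pose proof (sin2_cos2 x) as E. unfold Rsqr in E. nra. }
  assert (Hks : (INR k - 1) * sin x <= 4).
  { pose proof (sin_lt_x x (proj1 Hx)). nra. }
  assert (Hrk : r ^ k <= r ^ 5) by (apply pow_le_pow_of_le_1; lia || lra).
  assert (Hrk1 : r ^ (k - 1) <= r ^ 4) by (apply pow_le_pow_of_le_1; lia || lra).
  assert (T1 : - 8 * r ^ 5 * sin x * sin (INR k * x) <= 4 * r ^ 5).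
  { assert (0 < r ^ 5) by (apply pow_lt; lra).
    assert (- sin (INR k * x) * sin x <= sin x ^ 2) by nra. nra. }
  assert (T2 : (1 - r ^ 4) * INR k * cos (INR k * x) <= - 5 * (1 - r ^ 4) * cos x).
  { assert (HK5 : INR k * cos (INR k * x) <= - 5 * cos x) by nra.
    assert (0 < 1 - r ^ 4) by (replace (r ^ 4) with ((r ^ 2) ^ 2) by ring; nra).
    nra. }
  assert (T3 : 0 <= (4 * r ^ 3 + 8 * r ^ 5) * sin x * sin ((INR k - 2) * x)).
  { assert (0 < r ^ 3) by (apply pow_lt; lra). assert (0 < r ^ 5) by (apply pow_lt; lra).
    apply Rmult_le_pos; [apply Rmult_le_pos|]; lra. }
  assert (T4 : (1 - r ^ 2 - r ^ 4) * (INR k - 2) * cos ((INR k - 2) * x) <= 0).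
  { assert (0 <= 1 - r ^ 2 - r ^ 4) by (replace (r ^ 4) with ((r ^ 2) ^ 2) by ring; nra).
    assert (0 <= (1 - r ^ 2 - r ^ 4) * (INR k - 2)) by (apply Rmult_le_pos; lra).
    nra. }
  assert (T5 : 2 * (INR k - 1) * r ^ k * sin x ^ 2 <= 8 * r ^ 5).
  { assert (0 <= r ^ k) by (apply pow_le; lra).
    assert (sin x <= 1) by nra.
    replace (2 * (INR k - 1) * r ^ k * sin x ^ 2)
      with (2 * r ^ k * sin x * ((INR k - 1) * sin x)) by ring.
    assert (0 <= 2 * r ^ k * sin x) by nra. nra. }
  assert (T6 : r ^ (k - 1) * cos x <= r ^ 4 * cos x) by nra.
  (* Multiplied by [2 r], with [2 r cos x = 1], this reads [24 r^6 + 6 r^4 < 5]. *)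
  assert (Hfinal : 12 * r ^ 5 + (6 * r ^ 4 - 5) * cos x < 0).
  { apply Rmult_lt_reg_l with (2 * r); [lra|]. nra. }
  lra.
Qed.

Lemma Phi_over_rho_decreasing (k : nat) (x y : R) : (5 <= k)%nat ->
  PI < INR k * x -> x < y -> (INR k - 1) * y < PI ->
  Phi_over_rho k y < Phi_over_rho k x.
Proof.
  intros Hk H1 Hxy H2. pose proof PI_RGT_0.
  assert (HK : 5 <= INR k) by (apply le_INR in Hk; simpl in Hk; lra).
  cut (- Phi_over_rho k x < - Phi_over_rho k y); [lra|].
  apply (incr_function (fun t => - Phi_over_rho k t) (PI / INR k) (PI / (INR k - 1))
           (fun t => - dPhi_over_rho k t)); simpl.
  - intros t Ht1 Ht2. apply (is_derive_opp (Phi_over_rho k)), Phi_over_rho_derive; [lia|].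
    apply div_lt_iff in Ht1; [|lra]. apply lt_div_iff in Ht2; [|lra].
    apply cos_gt_0; nra.
  - intros t Ht1 Ht2. apply div_lt_iff in Ht1; [|lra]. apply lt_div_iff in Ht2; [|lra].
    pose proof (dPhi_over_rho_neg k t Hk Ht1 Ht2). lra.
  - apply div_lt_iff; lra.
  - exact Hxy.
  - apply lt_div_iff; lra.
Qed.

Lemma Phi_pos_below_eta (k : nat) (e x : R) : (4 <= k)%nat -> is_eta_k k e -> 0 < x < e ->
  0 < Phi k x.
Proof.
  intros Hk [[He1 He2] He0] Hx. pose proof PI_RGT_0.
  assert (HK : 4 <= INR k) by (apply le_INR in Hk; simpl in Hk; lra).
  apply div_lt_iff in He1; [|lra]. apply lt_div_iff in He2; [|lra].
  destruct (Nat.eq_dec k 4) as [->|Hk4].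
  { replace (INR 4) with 4 in * by (simpl; ring). apply (Phi_4_pos e); lra. }
  assert (Hk5 : (5 <= k)%nat) by lia.
  assert (HK5 : 5 <= INR k) by (apply le_INR in Hk5; simpl in Hk5; lra).
  assert (Hce : 0 < cos e) by (apply cos_gt_0; nra).
  assert (Hcx : 0 < cos x) by (apply cos_gt_0; nra).
  rewrite Phi_eq_rho_mul in He0 |- * by (lia || lra).
  assert (Hre : 0 < rho e) by (apply rho_pos; lra).
  assert (Hf0 : Phi_over_rho k e = 0).
  { apply Rmult_integral in He0 as [He0|He0]; [lra|exact He0]. }
  apply Rmult_lt_0_compat; [apply rho_pos; lra|].
  destruct (Rle_or_lt (INR k * x) PI) as [Hsmall|Hlarge].
  - apply Phi_over_rho_pos; lra || lia.
  - rewrite <- Hf0. apply Phi_over_rho_decreasing; lra || lia.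
Qed.

Theorem lemma6p2 (k : nat) (ek ek1 eta : R) :
  (4 <= k)%nat ->
  is_eta_k k ek ->
  is_eta_k (S k) ek1 ->
  ek1 <= eta < ek ->
  (0 < angle (z_ eta (k - 1)) (z_ eta k) (w_ eta 1) < PI) /\
  (0 < angle (z_ eta k) (w_ eta 1) (w_ eta 2) < PI) /\
  (0 < angle (w_ eta (k - 1)) (w_ eta k) (b0 eta) < PI) /\
  (0 < angle (w_ eta k) (b0 eta) (z_ eta 0) < PI).
Proof.
  intros Hk Hek [[Hek1 _] _] [Hlo Hhi]. pose proof PI_RGT_0.
  assert (HK : 4 <= INR k) by (apply le_INR in Hk; simpl in Hk; lra).
  (* The lower bound eta_(k+1) <= eta is only needed for 0 < eta. *)
  assert (Heta : 0 < eta).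
  { rewrite S_INR in Hek1. apply div_lt_iff in Hek1; [nra|lra]. }
  assert (Hangle : (INR k - 1) * eta < PI).
  { destruct Hek as [[_ Hek2] _]. apply lt_div_iff in Hek2; nra. }
  assert (Hcos : 1 / 2 < cos eta) by (apply cos_gt_half; nra).
  pose proof (rho_pos eta ltac:(lra)) as Hr. pose proof (rho_lt_1 eta Hcos) as Hr1.
  pose proof (c_pos eta ltac:(lra) Hr1) as Hc.
  pose proof (Phi_pos_below_eta k ek eta Hk Hek (conj Heta Hhi)) as HPhi.
  pose proof (Psi_pos k eta Hk Heta Hangle) as HPsi.
  assert (Hk2 : (2 <= k)%nat) by lia.
  split; [|split; [|split]]; apply angle_in_0_PI;
    [ rewrite Im_cross_at_z | rewrite Im_cross_at_w1
    | rewrite Im_cross_at_w | rewrite Im_cross_at_b0 ]; try lra; try exact Hk2.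
  all: apply Rmult_lt_0_compat; [apply Rmult_lt_0_compat; apply pow_lt|]; lra.
Qed.
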